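(* For positive integers $r,k,J$ there exists a constant $l=l(r,k,J)$ such that the following holds. Let $G<\mathrm{Aut}(\mathbb{G}_m^k)\cong\mathbb{G}_m^k\rtimes\mathrm{GL}_k(\mathbb{Z})$ be a finite subgroup, and let $A_0\leqslant G$ be an abelian normal subgroup of rank $r$ and index at most $J$. Then there exists an abelian characteristic subgroup $A\leqslant G$ of index at most $l$ with $A<\mathbb{G}_m^k$ (the subgroup of translations).
   Context: $\mathbb{G}_m^k$ is the $k$-dimensional algebraic torus over an algebraically closed field of characteristic zero, and $\mathrm{Aut}(\mathbb{G}_m^k)$ denotes its automorphism group as a variety, which sits in the exact sequence $1\to\mathbb{G}_m^k\to\mathrm{Aut}(\mathbb{G}_m^k)\to\mathrm{GL}_k(\mathbb{Z})\to1$. *)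

From HB Require Import structures.
From mathcomp Require Import all_boot all_order all_algebra all_fingroup all_solvable.
Set Implicit Arguments. Unset Strict Implicit. Unset Printing Implicit Defensive.
Import GRing.Theory Num.Theory.
Local Open Scope ring_scope.

(* An element is a pair (t, M) with t : 'rV[K]_k having nonzero entries
   (a point of the torus G_m^k(K) = (K^x)^k) and M : 'M[int]_k invertible
   over Z; it acts on the torus by  x |-> t · x^M,  where
   (x^M)_i = \prod_j x_j ^ (M i j). *)

Definition autGm (K : fieldType) (k : nat) : Type := ('rV[K]_k * 'M[int]_k)%type.

Definition torus_pow (K : fieldType) (k : nat) (M : 'M[int]_k) (x : 'rV[K]_k)
  : 'rV[K]_k := \row_i \prod_j (x 0 j) ^ (M i j).

Definition autGm_act (K : fieldType) (k : nat) (a : autGm K k) (x : 'rV[K]_k)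
  : 'rV[K]_k := \row_i (a.1 0 i * torus_pow a.2 x 0 i).

Definition is_autGm (K : fieldType) (k : nat) (a : autGm K k) : bool :=
  [forall i, a.1 0 i != 0] && (a.2 \in unitmx).

(* group law = composition of automorphisms:
   (t,M) ∘ (s,N) = (t · s^M, M N) *)
Definition autGm_mul (K : fieldType) (k : nat) (a b : autGm K k) : autGm K k :=
  (\row_i (a.1 0 i * torus_pow a.2 b.1 0 i), a.2 *m b.2).

Definition is_translation (K : fieldType) (k : nat) (a : autGm K k) : bool :=
  a.2 == 1%:M.

Definition autGm_embedding (K : fieldType) (k : nat) (gT : finGroupType)
    (G : {group gT}) (phi : gT -> autGm K k) : Prop :=
  [/\ {in G, forall g, is_autGm (phi g)},
      {in G &, forall g h, phi (g * h)%g = autGm_mul (phi g) (phi h)} &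
      {in G &, injective phi}].

(* The linear part M of g ^+ e, for e = #|GL_k(F_3)|, is an integer matrix of
   finite order congruent to 1 modulo 3, hence M = 1 (Minkowski): if
   M = 1 + 3^(a+1) B and M^p = 1 with p = 3 or p prime to 3, the binomial
   expansion of M^p forces 3 | B, so M - 1 is divisible by every power of 3.
   Therefore the subgroup A generated by the e-th powers of G consists of
   translations, so it is abelian, and it is characteristic. Since A0 / A is
   abelian of rank at most r and exponent dividing e, #|A0 / A| <= e ^ r, and
   #|G : A| <= #|G : A0| * #|A0 / A| <= J * e ^ r. *)

From HB Require Import structures.
From mathcomp Require Import all_boot all_order all_algebra all_fingroup all_solvable.
From mathcomp Require Import ring.
Set Implicit Arguments. Unset Strict Implicit. Unset Printing Implicit Defensive.
Import GRing.Theory Num.Theory.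

Local Open Scope group_scope.

Lemma card_abelian_exponent (gT : finGroupType) (H : {group gT}) e :
  abelian H -> exponent H %| e -> 0 < e -> #|H| <= (e ^ 'm(H))%N.
Proof.
move=> abH eH e_gt0; have [b defH tb] := abelian_structure abH.
rewrite grank_abelian // -size_abelian_type // -tb size_map.
rewrite -(bigdprod_card defH) -[(e ^ _)%N]iter_muln_1 -(count_predT b) -big_const_seq.
rewrite big_seq_cond [leqRHS]big_seq_cond; apply: leq_prod => x /andP[bx _].
have Hx : x \in H.
  rewrite -(bigdprodWY defH) bigcup_seq mem_gen //.
  exact: subsetP (bigcup_sup x bx) x (cycle_id x).
by rewrite -orderE dvdn_leq // (dvdn_trans (dvdn_exponent Hx)).
Qed.

Section PowerSubgroup.
Variables (gT : finGroupType) (e : nat).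
Implicit Types G H A B : {group gT}.

Definition powerg (G : {set gT}) := <<[set x ^+ e | x in G]>>.

Canonical powerg_group G := Eval hnf in [group of powerg G].

Lemma powerg_char G : powerg G \char G.
Proof.
have sXG : [set x ^+ e | x in G] \subset G.
  by apply/subsetP=> _ /imsetP[x xG ->]; rewrite groupX.
apply/charP; split=> [|f injf fG]; first by rewrite gen_subG.
rewrite /powerg morphim_gen // morphimEsub //; congr <<_>>.
apply/setP=> y; apply/imsetP/imsetP=> [[_ /imsetP[x xG ->] ->]|[z zG ->]].
  by exists (f x); rewrite ?morphX //; have := mem_morphim f xG xG; rewrite fG.
have /morphimP[x _ xG ->] : z \in f @* G by rewrite fG.
by exists (x ^+ e); [apply: imset_f | rewrite morphX].
Qed.

Lemma index_le_exponent_rank G A B :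
    A <| G -> B \subset G -> abelian B -> {in B, forall a, a ^+ e \in A} ->
    0 < e -> #|G : A| <= #|G : B| * (e ^ 'm(B))%N.
Proof.
move=> nsAG sBG abB BeA e_gt0.
have nAB : B \subset 'N(A) := subset_trans sBG (normal_norm nsAG).
have le_BA : #|B / A| <= (e ^ 'm(B))%N.
  apply: leq_trans (card_abelian_exponent (quotient_abelian A abB) _ e_gt0) _.
    apply/exponentP=> _ /morphimP[a Na Ba ->].
    by rewrite -morphX //= coset_id ?BeA.
  exact: leq_pexp2l e_gt0 (quotient_grank nAB).
rewrite (leq_trans (dvdn_leq _ (indexgS G (subsetIr B A)))) //.
rewrite -(Lagrange_index sBG (subsetIl B A)) indexgI -[#|B : A|]card_quotient //.
by rewrite leq_mul2l le_BA orbT.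
Qed.

End PowerSubgroup.
Local Close Scope group_scope.
Local Open Scope ring_scope.

Section IntMatrixDivisibility.
Variable n : nat.
Implicit Types (c d : int) (X Y : 'M[int]_n).

Definition dvdmx c X := exists Y, X = c *: Y.

Lemma dvdmxP c X : dvdmx c X <-> forall i j, (c %| X i j)%Z.
Proof.
split=> [[Y ->] i j|cX]; first by rewrite mxE dvdz_mulr.
exists (\matrix_(i, j) (X i j %/ c)%Z); apply/matrixP=> i j.
by rewrite !mxE mulrC divzK.
Qed.

Lemma dvdmx0 c : dvdmx c 0.
Proof. by exists 0; rewrite scaler0. Qed.

Lemma dvdmxD c X Y : dvdmx c X -> dvdmx c Y -> dvdmx c (X + Y).
Proof. by move=> [X' ->] [Y' ->]; exists (X' + Y'); rewrite scalerDr. Qed.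

Lemma dvdmxMn c X m : dvdmx c X -> dvdmx c (X *+ m).
Proof. by move=> [X' ->]; exists (X' *+ m); rewrite scalerMnr. Qed.

Lemma dvdmx_mulZ c d X : dvdmx c ((c * d) *: X).
Proof. by exists (d *: X); rewrite scalerA. Qed.

Lemma scalemx_int_eq0 c X : c != 0 -> c *: X = 0 -> X = 0.
Proof.
move=> c_neq0 /matrixP cX0; apply/matrixP=> i j; have /eqP := cX0 i j.
by rewrite !mxE mulf_eq0 (negPf c_neq0) => /eqP.
Qed.

Lemma dvdmx_pow3_eq0 X : (forall a, dvdmx (3 ^+ a) X) -> X = 0.
Proof.
move=> X3; apply/matrixP=> i j; rewrite mxE.
have [//|Xij_neq0] := eqVneq (X i j) 0.
have /dvdmxP/(_ i j) := X3 `|X i j|%N.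
rewrite dvdzE abszX => /dvdn_leq; rewrite absz_gt0 Xij_neq0 => /(_ isT).
by rewrite leqNgt ltn_expl.
Qed.

End IntMatrixDivisibility.

Section Minkowski.
Variable n : nat.
Implicit Types M : 'M[int]_n.+1.

Lemma dvdmxMl c (X Z : 'M[int]_n.+1) : dvdmx c X -> dvdmx c (Z * X).
Proof. by move=> [X' ->]; exists (Z * X'); rewrite scalerAr. Qed.

Lemma dvdmx_exp_sub1 c M m : dvdmx c (M - 1) -> dvdmx c (M ^+ m - 1).
Proof.
move=> cM; elim: m => [|m IHm]; first by rewrite expr0 subrr; apply: dvdmx0.
have -> : M ^+ m.+1 - 1 = M ^+ m * (M - 1) + (M ^+ m - 1).
  by rewrite exprS mulrBr mulr1 -exprS -exprSr addrA addrNK.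
by apply: dvdmxD => //; apply: dvdmxMl.
Qed.

Lemma dvdmx_sub1_mul3 c M : dvdmx c (M - 1) -> (forall B, M - 1 = c *: B -> dvdmx 3 B) ->
  dvdmx (c * 3) (M - 1).
Proof. by move=> [B eB] /(_ B eB) [B' eB']; exists B'; rewrite eB eB' scalerA. Qed.

Lemma dvdmx_sub1_lift_coprime M a p : (0 < p)%N -> coprime 3 p -> M ^+ p = 1 ->
  dvdmx (3 ^+ a.+1) (M - 1) -> dvdmx (3 ^+ a.+2) (M - 1).
Proof.
move=> p_gt0 co3p Mp M3; rewrite exprSr; apply: dvdmx_sub1_mul3 => // B eB.
set c : int := 3 ^+ a.+1 in eB; case: p p_gt0 co3p Mp => // p _ co3p.
rewrite -[M](subrK 1) eB exprD1n !big_ord_recl /= expr0 expr1 bin0 bin1 mulr1n.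
have [Z ->] : dvdmx (c * c)
    (\sum_(i < p) (c *: B) ^+ (bump 0 (bump 0 i)) *+ 'C(p.+1, bump 0 (bump 0 i))).
  apply: (big_ind (dvdmx (c * c))); [exact: dvdmx0|exact: dvdmxD|move=> i _].
  by apply: dvdmxMn; rewrite exprZn !exprS mulrA; apply: dvdmx_mulZ.
rewrite -[X in _ = X]addr0 => /addrI; rewrite scalerMnr -scalerA -scalerDr.
move/(scalemx_int_eq0 (expf_neq0 _ (isT : (3 : int) != 0)))/matrixP => pBcZ.
apply/dvdmxP=> i j; have /eqP := pBcZ i j.
rewrite !mxE mulmxnE addr_eq0 -[B i j *+ _]mulr_natr natz => /eqP pB.
have co3p' : coprimez 3 p.+1 by [].
by rewrite -(Gauss_dvdzl _ co3p') pB rpredN /c exprS -mulrA dvdz_mulr.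
Qed.

Lemma dvdmx_sub1_lift3 M a : M ^+ 3 = 1 ->
  dvdmx (3 ^+ a.+1) (M - 1) -> dvdmx (3 ^+ a.+2) (M - 1).
Proof.
move=> M3 M3a; rewrite exprSr; apply: dvdmx_sub1_mul3 => // B eB.
set c : int := 3 ^+ a.+1 in eB; have ec : c = 3 * 3 ^+ a by rewrite /c exprS.
move: M3; rewrite -[M](subrK 1) eB exprD1n !big_ord_recr big_ord0 /= add0r.
rewrite expr0 !exprZn expr1 => /eqP; rewrite -subr_eq0 => /eqP/matrixP B3.
apply/dvdmxP=> i j; have := B3 i j; rewrite !mxE.
set x := B i j; set y := \sum_k B i k * B k j; set z := \sum_k B i k * (B * B) k j.
move=> Bij.
(* entry (i, j) of 3cB + 3c^2 B^2 + c^3 B^3 = (1 + cB)^3 - 1 = 0 *)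
have /eqP : c * (3 * (x + c * y + 3 * 3 ^+ a * 3 ^+ a * z)) = 0.
  by rewrite -Bij ec; ring.
rewrite mulf_eq0 expf_eq0 /= mulf_eq0 /= => /eqP ex.
have -> : x = - (c * y + 3 * 3 ^+ a * 3 ^+ a * z).
  by apply/eqP; rewrite -addr_eq0 addrA ex.
by rewrite rpredN ec -!mulrA -mulrDr dvdz_mulr.
Qed.

Lemma eq1_dvdmx_sub1_lift M :
  (forall a, dvdmx (3 ^+ a.+1) (M - 1) -> dvdmx (3 ^+ a.+2) (M - 1)) ->
  dvdmx 3 (M - 1) -> M = 1.
Proof.
move=> lift M3; apply/eqP; rewrite -subr_eq0; apply/eqP/dvdmx_pow3_eq0.
have M3a a : dvdmx (3 ^+ a.+1) (M - 1) by elim: a => [|a]; [rewrite expr1 | exact: lift].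
by case=> [|a]; [exists (M - 1); rewrite expr0 scale1r | exact: M3a].
Qed.

Lemma eq1_finite_order_dvdmx3 M m : (0 < m)%N -> M ^+ m = 1 -> dvdmx 3 (M - 1) -> M = 1.
Proof.
move=> m_gt0; have [u co3u em] := pfactor_coprime (isT : prime 3) m_gt0.
have u_gt0 : (0 < u)%N by move: m_gt0; rewrite em muln_gt0 => /andP[].
rewrite em; elim: (logn 3 m) M => [|b IHb] M Mm M3; apply: eq1_dvdmx_sub1_lift (M3) => a.
  by apply: dvdmx_sub1_lift_coprime u_gt0 co3u _; rewrite muln1 in Mm.
apply: dvdmx_sub1_lift3; apply: IHb; last exact: dvdmx_exp_sub1.
by rewrite -exprM mulnCA -expnS.
Qed.

Lemma dvdmx3_exp_card_GL_sub1 M : M \in unitmx ->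
  dvdmx 3 (M ^+ #|[set: {unit 'M['F_3]_n.+1}]| - 1).
Proof.
move=> Mu; have fMu : map_mx (intr : int -> 'F_3) M \is a GRing.unit.
  by rewrite -[_ \is a _]/(_ \in unitmx) unitmxE det_map_mx rmorph_unit -?unitmxE.
have /(congr1 val) := expg_cardG (in_setT (FinRing.unit _ fMu)).
rewrite FinRing.val_unitX /= -rmorphXn /= => /matrixP fMe.
apply/dvdmxP=> i j; rewrite (dvdz_pcharf (pchar_Fp (isT : prime 3))).
by have := fMe i j; rewrite !mxE rmorphB /= => ->; rewrite rmorph_nat subrr.
Qed.

End Minkowski.

Section TorusAutomorphisms.
Variables (K : fieldType) (n : nat) (gT : finGroupType) (G : {group gT}).
Variable phi : gT -> autGm K n.+1.
Hypothesis phiG : autGm_embedding G phi.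

Lemma autGm_linearM : {in G &, forall g h, (phi (g * h)%g).2 = (phi g).2 * (phi h).2}.
Proof. by case: phiG => _ phiM _ g h Gg Gh; rewrite phiM. Qed.

Lemma autGm_linear_unit : {in G, forall g, (phi g).2 \in unitmx}.
Proof. by case: phiG => phiAut _ _ g /phiAut/andP[]. Qed.

Lemma autGm_linear1 : (phi 1%g).2 = 1.
Proof.
apply: (mulIr (autGm_linear_unit (group1 G))).
by rewrite mul1r -autGm_linearM ?mulg1.
Qed.

Lemma autGm_linearX : {in G, forall g m, (phi (g ^+ m)%g).2 = (phi g).2 ^+ m}.
Proof.
move=> g Gg; elim=> [|m IHm]; first by rewrite expg0 expr0 autGm_linear1.
by rewrite expgS autGm_linearM ?groupX // IHm exprS.
Qed.

Definition translations := [set g in G | is_translation (phi g)].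

Lemma translations_group_set : group_set translations.
Proof.
apply/group_setP; split=> [|g h]; first by rewrite inE group1 /is_translation autGm_linear1 eqxx.
rewrite !inE /is_translation => /andP[Gg /eqP g1] /andP[Gh /eqP h1].
by rewrite groupM // autGm_linearM // g1 h1; apply/eqP/mulr1.
Qed.

Canonical translations_group := Group translations_group_set.

Lemma torus_pow1 (x : 'rV[K]_n.+1) : torus_pow 1%:M x = x.
Proof.
apply/rowP=> i; rewrite mxE (bigD1 i) //= big1 => [|j ji].
  by rewrite mxE eqxx expr1z mulr1.
by rewrite mxE eq_sym (negPf ji) expr0z.
Qed.

Lemma translations_abelian : abelian translations.
Proof.
apply/centsP=> g; rewrite inE => /andP[Gg /eqP g1] h; rewrite inE => /andP[Gh /eqP h1].
case: phiG => _ phiM phi_inj; apply: phi_inj; rewrite ?groupM // !phiM //.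
rewrite /autGm_mul g1 h1 !torus_pow1; congr (_, _).
by apply/rowP=> i; rewrite !mxE mulrC.
Qed.

Lemma autGm_linear_exp_card_GL : {in G, forall g,
  (phi (g ^+ #|[set: {unit 'M['F_3]_n.+1}]|)%g).2 = 1}.
Proof.
move=> g Gg; rewrite autGm_linearX //.
apply: (eq1_finite_order_dvdmx3 (order_gt0 g)); last first.
  exact: dvdmx3_exp_card_GL_sub1 (autGm_linear_unit Gg).
by rewrite -exprM mulnC -autGm_linearX // expgM expg_order expg1n autGm_linear1.
Qed.

End TorusAutomorphisms.

Local Close Scope ring_scope.

Theorem mainTheorem16 :
  forall r k J : nat, (0 < r)%N -> (0 < k)%N -> (0 < J)%N ->
  exists l : nat,
  forall (K : closedFieldType), [pchar K]%R =i pred0 ->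
  forall (gT : finGroupType) (G : {group gT}) (phi : gT -> autGm K k),
    autGm_embedding G phi ->
  forall A0 : {group gT},
    (A0 <| G)%g -> (abelian A0)%g -> ('m(A0))%g = r -> (#|G : A0|)%g <= J ->
  exists A : {group gT},
    [/\ (A \char G)%g, (abelian A)%g, (#|G : A|)%g <= l &
        {in A, forall a, is_translation (phi a)}].
Proof.
move=> r [//|n] J _ _ _; set e := #|[set: {unit 'M['F_3]_n.+1}]|.
have e_gt0 : (0 < e)%N by apply/card_gt0P; exists 1%g; rewrite inE.
exists (J * e ^ r)%N => K _ gT G phi phiG A0 nsA0G abA0 rA0 iA0.
have chAG := powerg_char e G.
have sAT : powerg e G \subset translations G phi.
  rewrite gen_subG; apply/subsetP=> _ /imsetP[g Gg ->].
  by rewrite inE groupX //= /is_translation (autGm_linear_exp_card_GL phiG).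
exists (powerg_group e G); split=> //.
- exact: abelianS sAT (translations_abelian phiG).
- have sA0G := normal_sub nsA0G.
  have A0eA : {in A0, forall a, (a ^+ e)%g \in powerg e G}.
    by move=> a A0a; rewrite mem_gen //; apply/imsetP; exists a; rewrite ?(subsetP sA0G).
  apply: leq_trans (index_le_exponent_rank (char_normal chAG) sA0G abA0 A0eA e_gt0) _.
  by rewrite -rA0 leq_mul2r iA0 orbT.
- by move=> a /(subsetP sAT); rewrite inE => /andP[].
Qed.
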